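(* Let $\vec H$ be a DAG. Then there exist graphs $H_1,H_2\in\mathcal G_{\vec H}$ such that $\mathrm{td}(H_1)\le \mathrm{dtd}(\vec H)\le \mathrm{td}(H_2)$.
   Context: For a DAG $\vec H$, a source is a vertex of in-degree $0$; $S$ denotes the set of sources and $N$ the set of non-sources; $R(s)$ is the set of vertices reachable from $s$. $\mathrm{Bip}(\vec H)$ is the bipartite graph with parts $S$ and $N$ in which $s\in S$ and $v\in N$ are adjacent iff $v\in R(s)$. $\mathcal G_{\vec H}$ is the set of all graphs obtained from $\mathrm{Bip}(\vec H)$ by contracting, for each non-source $v$, one edge incident to $v$ (so that all non-sources are eliminated and the resulting graph has vertex set $S$). Equivalently, for a choice of map $f:N\to S$ with $v\in R(f(v))$, the graph has vertex set $S$ and distinct $s,s'$ adjacent iff there is $v\in N$ with $v\in R(s)\cap R(s')$ and $f(v)\in\{s,s'\}$. A DAG elimination forest of $\vec H$ is defined recursively: if $\vec H$ is empty, it is empty; if the underlying undirected graph is disconnected, it is the union of DAG elimination forests of its components; if connected with exactly one source $s$, it is the single-node tree $s$; otherwise it is a tree whose root is an arbitrarily chosen source $s$ and whose subtrees are the trees of a DAG elimination forest of the DAG obtained by deleting $s$ and all vertices reachable from $s$. The depth of a rooted forest is the maximum number of nodes on a root-to-leaf path; $\mathrm{dtd}(\vec H)$ is the minimum depth of a DAG elimination forest. $\mathrm{td}$ denotes the usual treedepth of an undirected graph. *)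

From mathcomp Require Import all_boot.
Set Implicit Arguments. Unset Strict Implicit. Unset Printing Implicit Defensive.

Section Defs.
Variable T : finType.

Definition acyclic (e : rel T) : Prop :=
  forall x y, e x y -> ~~ connect e y x.

Definition restr (r : rel T) (V : {set T}) : rel T :=
  [rel x y | [&& x \in V, y \in V & r x y]].

Definition ucon (r : rel T) (V : {set T}) : rel T :=
  [rel x y | [&& x \in V, y \in V & r x y || r y x]].

Definition uconnected (r : rel T) (V : {set T}) : bool :=
  (V != set0) && [forall x in V, forall y in V, connect (ucon r V) x y].

Definition comp (r : rel T) (V : {set T}) (x : T) : {set T} :=
  [set y in V | connect (ucon r V) x y].

Definition sources (e : rel T) : {set T} := [set s | [forall x, ~~ e x s]].
Definition nonsources (e : rel T) : {set T} := ~: sources e.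

Definition reach (e : rel T) (s : T) : {set T} := [set v | connect e s v].

Definition is_source_in (e : rel T) (V : {set T}) (s : T) : bool :=
  (s \in V) && [forall x in V, ~~ e x s].
Definition reach_in (e : rel T) (V : {set T}) (s : T) : {set T} :=
  [set v in V | connect (restr e V) s v].

(* dtd_le e V k : the sub-DAG induced on V has a DAG elimination forest of
   depth at most k.  The three constructors follow the recursive definition:
   empty DAG -> empty forest (depth 0);
   disconnected -> union of forests of the components (depth = max);
   connected -> tree rooted at a source s whose subtrees form a forest of the
   DAG obtained by deleting s and all vertices reachable from s
   (depth = 1 + depth of that forest; the one-source case is the instance
   where the remaining DAG is empty). *)
Inductive dtd_le (e : rel T) : {set T} -> nat -> Prop :=
| dtd_empty k : dtd_le e set0 k
| dtd_disc V k : V != set0 -> ~~ uconnected e V ->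
    (forall x, x \in V -> dtd_le e (comp e V x) k) -> dtd_le e V k
| dtd_conn V s k : uconnected e V -> is_source_in e V s ->
    dtd_le e (V :\: reach_in e V s) k -> dtd_le e V k.+1.

Definition is_dtd (e : rel T) (d : nat) : Prop :=
  dtd_le e [set: T] d /\ forall k, dtd_le e [set: T] k -> d <= k.

(* td_le g V k : the undirected graph with adjacency g (symmetrised),
   induced on V, has treedepth at most k, via the standard recursive
   definition: td(empty) = 0; td = max over components if disconnected;
   td = 1 + min_v td(G - v) if connected. *)
Inductive td_le (g : rel T) : {set T} -> nat -> Prop :=
| td_empty k : td_le g set0 k
| td_disc V k : V != set0 -> ~~ uconnected g V ->
    (forall x, x \in V -> td_le g (comp g V x) k) -> td_le g V k
| td_conn V v k : uconnected g V -> v \in V ->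
    td_le g (V :\ v) k -> td_le g V k.+1.

Definition is_td (g : rel T) (V : {set T}) (t : nat) : Prop :=
  td_le g V t /\ forall k, td_le g V k -> t <= k.

Definition valid_contraction (e : rel T) (f : T -> T) : Prop :=
  forall v, v \in nonsources e -> (f v \in sources e) /\ (v \in reach e (f v)).

Definition contr_adj (e : rel T) (f : T -> T) : rel T :=
  [rel s s' | (s != s') &&
     [exists v, [&& v \in nonsources e, v \in reach e s, v \in reach e s'
                 & (f v == s) || (f v == s')]]].

Definition in_GH (e : rel T) (g : rel T) : Prop :=
  exists f, valid_contraction e f /\ g =2 contr_adj e f.

End Defs.

(* For every admissible contraction map f, an elimination of the contraction
   graph G_f yields a DAG elimination forest of the same depth: deleting a
   source s of G_f corresponds to deleting s together with everything it
   reaches, which removes exactly s from the sources, and G_f is connected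
   whenever the DAG is, because every non-source is contracted into a source
   reaching it.  Hence dtd <= td(G_f) for every f.  Conversely, following an
   optimal DAG elimination forest we build a map f with td(G_f) <= dtd:
   components are treated independently, and at a root s everything
   reachable from s is contracted into s, so that G_f minus s is a subgraph of
   the contraction graph of the remaining DAG. *)

From mathcomp Require Import all_boot zify.
From Stdlib Require Import Classical IndefiniteDescription.
(* Imported last, so that [comp] is the component of a vertex rather than
   function composition. *)
Set Implicit Arguments. Unset Strict Implicit. Unset Printing Implicit Defensive.

Section Components.
Variable T : finType.
Implicit Types (g : rel T) (W : {set T}).

Lemma ucon_sym g W : symmetric (ucon g W).
Proof. by move=> x y; rewrite /ucon /= orbC andbCA. Qed.

Lemma ucon_connect_sym g W : connect_sym (ucon g W).
Proof. exact/sym_connect_sym/ucon_sym. Qed.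

Lemma connect_invariant (r : rel T) (P : T -> Prop) x y :
  (forall a b, r a b -> P a -> P b) -> connect r x y -> P x -> P y.
Proof.
move=> rP /connectP[p + ->]; elim: p x => //= a p IHp x /andP[xa pa] Px.
exact: IHp a pa (rP _ _ xa Px).
Qed.

Lemma comp_sub g W x : comp g W x \subset W.
Proof. by apply/subsetP=> y /setIdP[]. Qed.

Lemma mem_comp g W x : x \in W -> x \in comp g W x.
Proof. by move=> xW; rewrite inE xW connect0. Qed.

Lemma comp_connect g W x y : y \in comp g W x -> connect (ucon g W) x y.
Proof. by case/setIdP. Qed.

Lemma comp_ucon g W x a b :
  a \in comp g W x -> ucon g W a b -> b \in comp g W x.
Proof.
case/setIdP=> _ xa ab; rewrite inE (connect_trans xa (connect1 ab)) andbT.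
by case/and3P: ab.
Qed.

Lemma comp_trans g W x y : y \in comp g W x -> comp g W y = comp g W x.
Proof.
move=> /comp_connect xy; apply/setP=> z; rewrite !inE; congr (_ && _).
apply/idP/idP; first exact: connect_trans.
by apply: connect_trans; rewrite ucon_connect_sym.
Qed.

Lemma uconnected_comp g W x : x \in W -> uconnected g (comp g W x).
Proof.
move=> xW; set C := comp g W x; have xC : x \in C := mem_comp g xW.
have path_in z p : z \in C -> path (ucon g W) z p -> connect (ucon g C) z (last z p).
  elim: p z => /= [|a p IHp] z zC; first by rewrite connect0.
  case/andP=> za pa; have aC := comp_ucon zC za.
  apply: connect_trans (connect1 _) (IHp a aC pa).
  by rewrite /ucon /= zC aC; case/and3P: za.
have from_x y : y \in C -> connect (ucon g C) x y.
  by case/comp_connect/connectP=> p xp ->; apply: path_in.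
apply/andP; split; first by apply/set0Pn; exists x.
apply/forall_inP=> y yC; apply/forall_inP=> z zC.
by apply: connect_trans (from_x z zC); rewrite ucon_connect_sym from_x.
Qed.

Lemma comp_uconnected g W x : uconnected g W -> x \in W -> comp g W x = W.
Proof.
case/andP=> _ /forall_inP Wc xW; apply/setP=> z; rewrite inE.
by case zW: (z \in W); rewrite //= (forall_inP (Wc x xW)).
Qed.

Lemma uconnected_sub_comp g g' W W' x : W' \subset W ->
  {in W' &, subrel g' g} -> uconnected g' W' -> x \in W' ->
  W' \subset comp g W x.
Proof.
move=> /subsetP sW' g'g /andP[_ /forall_inP W'c] xW'; apply/subsetP=> y yW'.
rewrite inE (sW' y yW') /=; apply: connect_sub (forall_inP (W'c x xW') y yW').
move=> a b /and3P[aW' bW' ab]; apply: connect1.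
rewrite /ucon /= (sW' a aW') (sW' b bW') /=.
by case/orP: ab => [/(g'g a b aW' bW') -> | /(g'g b a bW' aW') ->]; rewrite ?orbT.
Qed.

Lemma td_le_leq g W k k' : td_le g W k -> k <= k' -> td_le g W k'.
Proof.
move=> h; elim: h k' => {W k}
  [k k' _ | V k V0 Vc _ IH k' kk' | V v k Vc vV _ IH [|k'] //].
- exact: td_empty.
- by apply: td_disc => // x xV; apply: IH.
- by move=> kk'; apply: td_conn Vc vV (IH _ kk').
Qed.

Lemma td_le_comps g W k :
  (forall x, x \in W -> td_le g (comp g W x) k) -> td_le g W k.
Proof.
move=> hC; have [->|[x xW]] := set_0Vmem W; first exact: td_empty.
have [Wc|Wnc] := boolP (uconnected g W).
  by rewrite -(comp_uconnected Wc xW); apply: hC.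
by apply: td_disc => //; apply/set0Pn; exists x.
Qed.

Lemma td_le_comp g W k x : td_le g W k -> x \in W -> td_le g (comp g W x) k.
Proof.
case=> {W k} [k | V k _ _ hC | V v k Vc vV h] xW; first by rewrite inE in xW.
  exact: hC.
by rewrite (comp_uconnected Vc xW); apply: td_conn Vc vV h.
Qed.

Lemma td_le_uconnectedP g W k : uconnected g W -> td_le g W k ->
  exists k' v, [/\ k = k'.+1, v \in W & td_le g (W :\ v) k'].
Proof.
move=> + h; case: h => {W k} [k /andP[] | V k _ /negbTE -> | V v k _ vV h _] //.
  by rewrite eqxx.
by exists k, v.
Qed.

(* Induction on [k], component by component: a component of the subgraph lies
   in a component of the graph, and we delete the same vertex if it is there. *)
Lemma td_le_sub g g' k W W' : td_le g W k -> W' \subset W ->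
  {in W' &, subrel g' g} -> td_le g' W' k.
Proof.
elim: k W W' => [|k IH] W W' h sW' g'g; apply: td_le_comps => x xW';
  have xW := subsetP sW' x xW';
  have [k' [v [Ek vC hv]]] :=
    td_le_uconnectedP (uconnected_comp g xW) (td_le_comp h xW);
  first by [].
move: Ek hv => [<-{k'}] hv.
have sC' := comp_sub g' W' x.
have g'gC : {in comp g' W' x &, subrel g' g}.
  by move=> a b aC bC; apply: g'g; apply: (subsetP sC').
have sC : comp g' W' x \subset comp g W x.
  apply: uconnected_sub_comp (subset_trans sC' sW') g'gC _ (mem_comp g' xW').
  exact: uconnected_comp.
have [vC'|vC'] := boolP (v \in comp g' W' x).
  apply: td_conn (uconnected_comp g' xW') vC' (IH _ _ hv (setSD _ sC) _).
  by move=> a b /setD1P[_ aC] /setD1P[_ bC]; apply: g'gC.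
apply: td_le_leq (leqnSn k); apply: IH hv _ g'gC.
apply/subsetP=> y yC; rewrite in_setD1 (subsetP sC _ yC) andbT.
by apply: contraNneq vC' => <-.
Qed.

Lemma td_le_card g W : td_le g W #|W|.
Proof.
suff td_le_bound n : forall W, #|W| <= n -> td_le g W n by apply: td_le_bound.
elim: n => [|n IH] {}W Wn.
  by rewrite (cards0_eq (_ : #|W| = 0)); [apply: td_empty | lia].
apply: td_le_comps => x xW.
apply: td_conn (uconnected_comp g xW) (mem_comp g xW) (IH _ _).
have := cardsD1 x (comp g W x); rewrite mem_comp //.
have := subset_leq_card (comp_sub g W x); lia.
Qed.

End Components.

Lemma ex_minimal (P : nat -> Prop) :
  (exists n, P n) -> exists m, P m /\ forall k, P k -> m <= k.
Proof.
case=> n; elim: n {-2}n (leqnn n) => [|n IH] m mn Pm.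
  by exists m; split=> // k _; rewrite (_ : m = 0) //; lia.
have [[k [km Pk]]|nosmaller] := classic (exists k, k < m /\ P k).
  by apply: (IH k) => //; lia.
exists m; split=> // k Pk; rewrite leqNgt; apply/negP=> km.
by apply: nosmaller; exists k.
Qed.

Section DagContractions.
Variable T : finType.
Variable e : rel T.
Notation S := (sources e).
Implicit Types (V W : {set T}) (f : T -> T).

Lemma mem_nonsources v : (v \in nonsources e) = (v \notin S).
Proof. exact: in_setC. Qed.

Lemma mem_reach s v : (v \in reach e s) = connect e s v.
Proof. by rewrite inE. Qed.

(* The vertex sets occurring in a DAG elimination forest are closed under
   predecessors; on such sets reachability inside [V] is plain reachability. *)
Definition pred_closed V := forall x y, e x y -> y \in V -> x \in V.

Lemma pred_closedT : pred_closed [set: T].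
Proof. by move=> x y _ _; rewrite in_setT. Qed.

Lemma pred_closed_connect_restr V x y : pred_closed V ->
  connect e x y -> y \in V -> x \in V /\ connect (restr e V) x y.
Proof.
move=> closedV /connectP[p + ->]; elim: p x => [|a p IHp] x /=.
  by move=> _ xV; rewrite xV connect0.
case/andP=> xa pa /(IHp a pa)[aV ap]; have xV := closedV _ _ xa aV.
by split=> //; apply: connect_trans (connect1 _) ap; rewrite /restr /= xV aV.
Qed.

Lemma pred_closed_connect V x y :
  pred_closed V -> connect e x y -> y \in V -> x \in V.
Proof. by move=> closedV xy /(pred_closed_connect_restr closedV xy)[]. Qed.

Lemma connect_ucon V x y : pred_closed V ->
  connect e x y -> y \in V -> connect (ucon e V) x y.
Proof.
move=> closedV xy /(pred_closed_connect_restr closedV xy)[_].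
apply: connect_sub => a b /and3P[aV bV ab].
by apply: connect1; rewrite /ucon /= aV bV ab.
Qed.

Lemma reach_inE V s : pred_closed V -> reach_in e V s = V :&: reach e s.
Proof.
move=> closedV; apply/setP=> v; rewrite !inE; have [vV|] //= := boolP (v \in V).
apply/idP/idP; last by move=> sv; case: (pred_closed_connect_restr closedV sv vV).
by apply: connect_sub => a b /and3P[_ _ ab]; apply: connect1.
Qed.

Lemma connect_to_source s x : s \in S -> connect e x s -> x = s.
Proof.
move=> sS /connectP[p]; case/lastP: p => [|p y] //=.
rewrite rcons_path last_rcons => /andP[_ ey] sy.
by move: sS; rewrite sy inE => /forallP/(_ (last x p)); rewrite ey.
Qed.

Lemma is_source_inE V s : pred_closed V -> s \in V -> is_source_in e V s = (s \in S).
Proof.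
move=> closedV sV; rewrite /is_source_in sV inE; apply/forall_inP/forallP => noin x.
  by apply/negP=> xs; have := noin x (closedV _ _ xs sV); rewrite xs.
by move=> _; apply: noin.
Qed.

Lemma pred_closed_comp V x : pred_closed V -> pred_closed (comp e V x).
Proof.
move=> closedV a y ay yC; have yV := subsetP (comp_sub e V x) y yC.
by apply: comp_ucon yC _; rewrite /ucon /= yV (closedV _ _ ay yV) ay orbT.
Qed.

Lemma pred_closed_diff_reach V s :
  pred_closed V -> pred_closed (V :\: reach_in e V s).
Proof.
move=> closedV; rewrite reach_inE // => a y ay; rewrite !inE => /andP[sy yV].
rewrite (closedV _ _ ay yV) andbT; apply: contra sy => /andP[_ sa].
by rewrite yV (connect_trans sa (connect1 ay)).
Qed.

Lemma diff_reach_proper V s : pred_closed V -> s \in V ->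
  V :\: reach_in e V s \proper V.
Proof.
move=> closedV sV; apply/properP; split; first exact: subsetDl.
by exists s; rewrite // in_setD reach_inE // in_setI sV inE connect0.
Qed.

Lemma sources_diff_reach V s : pred_closed V -> s \in S :&: V ->
  S :&: (V :\: reach_in e V s) = (S :&: V) :\ s.
Proof.
move=> closedV /setIP[sS sV]; rewrite reach_inE //; apply/setP=> y.
rewrite in_setD1 !in_setI in_setD in_setI mem_reach.
have [->|ys] := eqVneq y s; first by rewrite connect0 sV andbF.
have [yS|] //= := boolP (y \in S); have [yV|] //= := boolP (y \in V).
rewrite andbT; apply/negP=> sy.
by move: ys; rewrite (connect_to_source yS sy) eqxx.
Qed.

Lemma comp_connectE V x a b : pred_closed V ->
  connect e a b -> b \in V -> (a \in comp e V x) = (b \in comp e V x).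
Proof.
move=> closedV ab bV; have aV := pred_closed_connect closedV ab bV.
have {}ab := connect_ucon closedV ab bV.
rewrite !inE aV bV /=; apply/idP/idP=> [xa | xb]; first exact: connect_trans xa ab.
by apply: connect_trans xb _; rewrite ucon_connect_sym.
Qed.

Hypothesis acyclic_e : acyclic e.

Lemma exists_source v : exists2 s, s \in S & connect e s v.
Proof.
pose anc x := [set y | connect e y x].
have [x xv minx] := @arg_minnP _ v (connect e ^~ v) (fun y => #|anc y|) (connect0 e v).
exists x => //; rewrite inE; apply/forallP=> y; apply/negP=> yx.
have ancyx : anc y \proper anc x.
  apply/properP; split; last by exists x; rewrite !inE ?connect0 ?acyclic_e.
  by apply/subsetP=> z; rewrite !inE => zy; apply: connect_trans zy (connect1 yx).
have := proper_card ancyx; rewrite ltnNge minx //.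
exact: connect_trans (connect1 yx) xv.
Qed.


(* [contr_adj_in V f] is the contraction graph of [f] in which only the
   non-sources of [V] are used as witnesses; for [V = setT] it is
   [contr_adj e f]. *)
Definition contr_adj_in V f : rel T := [rel s s' | (s != s') &&
  [exists v, [&& v \in V, v \in nonsources e, v \in reach e s, v \in reach e s'
              & (f v == s) || (f v == s')]]].

Definition valid_in V f :=
  forall v, v \in V -> v \notin S -> f v \in S /\ connect e (f v) v.

Definition contraction_td_le V k :=
  exists f, valid_in V f /\ td_le (contr_adj_in V f) (S :&: V) k.

Lemma contr_adj_inP V f a b : reflect
  (a != b /\ exists w, [/\ w \in V, w \notin S, connect e a w, connect e b w
                         & (f w == a) || (f w == b)])
  (contr_adj_in V f a b).
Proof.
apply: (iffP andP) => [[ab /existsP[w /and5P[wV]]] | [ab [w [wV wS aw bw fw]]]].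
  by rewrite mem_nonsources !mem_reach => wS aw bw fw; split=> //; exists w.
split=> //; apply/existsP; exists w.
by rewrite wV mem_nonsources wS !mem_reach aw bw.
Qed.

Lemma contr_adj_in_sym V f : symmetric (contr_adj_in V f).
Proof.
move=> a b; apply/contr_adj_inP/contr_adj_inP=> -[ab [w [wV wS aw bw fw]]];
  by split; [rewrite eq_sym | exists w; split; rewrite // orbC].
Qed.

Lemma contr_adj_in_sub V V' f : V' \subset V ->
  subrel (contr_adj_in V' f) (contr_adj_in V f).
Proof.
move=> sV' a b /contr_adj_inP[ab [w [wV' wS aw bw fw]]].
by apply/contr_adj_inP; split=> //; exists w; rewrite (subsetP sV').
Qed.

Lemma eq_contr_adj_in V f g :
  {in V, f =1 g} -> contr_adj_in V f =2 contr_adj_in V g.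
Proof.
move=> fg a b; apply: andb_id2l => _; apply: eq_existsb => w.
by case wV: (w \in V); rewrite //= fg.
Qed.

Lemma contr_adj_in_comp V f x a b : pred_closed V -> a \in comp e V x ->
  contr_adj_in V f a b -> contr_adj_in (comp e V x) f a b.
Proof.
move=> closedV aC /contr_adj_inP[ab [w [wV wS aw bw fw]]].
by apply/contr_adj_inP; split=> //; exists w; rewrite -(comp_connectE x closedV aw).
Qed.

Lemma contr_connect V f s t w : s \in S :&: V -> t \in S :&: V ->
  w \in V -> w \notin S -> connect e s w -> connect e t w ->
  (f w == s) || (f w == t) -> connect (ucon (contr_adj_in V f) (S :&: V)) s t.
Proof.
move=> sW tW wV wS sw tw fw; have [<-|st] := eqVneq s t; first exact: connect0.
apply: connect1; rewrite /ucon /= sW tW; apply/orP; left.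
by apply/contr_adj_inP; split=> //; exists w.
Qed.

Section Connectivity.
Variables (V : {set T}) (f : T -> T).
Hypotheses (closedV : pred_closed V) (validf : valid_in V f).
Notation G := (ucon (contr_adj_in V f) (S :&: V)).

Lemma valid_in_sources v :
  v \in V -> v \notin S -> f v \in S :&: V /\ connect e (f v) v.
Proof.
move=> vV vS; have [fvS fvv] := validf vV vS.
by rewrite in_setI fvS (pred_closed_connect closedV fvv vV).
Qed.

Lemma nonsource_succ x y : e x y -> y \notin S.
Proof. by move=> xy; rewrite inE negb_forall; apply/existsP; exists x; rewrite xy. Qed.

(* The predecessor [x] of a vertex reached from [s] is reached from a source
   linked to [s]: go through [f y], and then through [x] or [f x]. *)
Lemma contr_connect_pred s x y : s \in S :&: V -> connect e s y -> e x y -> y \in V ->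
  exists t, [/\ t \in S :&: V, connect G s t & connect e t x].
Proof.
move=> sW sy xy yV; have xV := closedV xy yV.
have [fyW fyy] := valid_in_sources yV (nonsource_succ xy).
have yS := nonsource_succ xy.
have s_fy : connect G s (f y).
  by apply: contr_connect sW fyW yV yS sy fyy _; rewrite eqxx orbT.
have [xS|xS] := boolP (x \in S).
  have xW : x \in S :&: V by rewrite in_setI xS.
  exists x; split; rewrite ?connect0 //; apply: connect_trans s_fy _.
  by apply: contr_connect fyW xW yV yS fyy (connect1 xy) _; rewrite eqxx.
have [fxW fxx] := valid_in_sources xV xS.
exists (f x); split=> //; apply: connect_trans s_fy _.
apply: contr_connect fyW fxW yV yS fyy (connect_trans fxx (connect1 xy)) _.
by rewrite eqxx.
Qed.

Lemma uconnected_contraction :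
  uconnected e V -> uconnected (contr_adj_in V f) (S :&: V).
Proof.
case/andP=> /set0Pn[v vV] /forall_inP Vc; apply/andP; split.
  have [s sS sv] := exists_source v.
  by apply/set0Pn; exists s; rewrite in_setI sS (pred_closed_connect closedV sv vV).
apply/forall_inP=> a aW; apply/forall_inP=> b bW.
have [[aS aV] [bS bV]] := (setIP aW, setIP bW).
pose reached y := exists t, [/\ t \in S :&: V, connect G a t & connect e t y].
have : reached b.
  apply: connect_invariant (forall_inP (Vc a aV) b bV) _; last first.
    by exists a; split; rewrite ?connect0.
  move=> x y /and3P[xV yV /orP[xy | yx]] [t [tW a_t tx]].
    by exists t; split=> //; apply: connect_trans tx (connect1 xy).
  have [t' [t'W tt' t'y]] := contr_connect_pred tW tx yx xV.
  by exists t'; split=> //; apply: connect_trans a_t tt'.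
by case=> t [_ a_t /(connect_to_source bS) tb]; rewrite -tb.
Qed.

End Connectivity.

Lemma valid_in_sub V V' f : V' \subset V -> valid_in V f -> valid_in V' f.
Proof. by move=> /subsetP sV' validf v /sV'; apply: validf. Qed.

(* Rooting the DAG forest at the vertex [s] deleted first from the contraction
   graph works because deleting [reach s] removes exactly [s] from the sources. *)
Lemma dtd_le_of_contraction V f k : pred_closed V -> valid_in V f ->
  td_le (contr_adj_in V f) (S :&: V) k -> dtd_le e V k.
Proof.
have [n] := ubnP #|V|; elim: n V k => // n IH V k /ltnSE Vn closedV validf td_k.
have [->|[x0 x0V]] := set_0Vmem V; first exact: dtd_empty.
have [Vc|Vnc] := boolP (uconnected e V).
  have [k' [s [-> sW td_k']]] :=
    td_le_uconnectedP (uconnected_contraction closedV validf Vc) td_k.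
  have [sS sV] := setIP sW.
  apply: (dtd_conn Vc (_ : is_source_in e V s)); first by rewrite is_source_inE.
  have validV' := valid_in_sub (subsetDl V (reach_in e V s)) validf.
  apply: IH _ _ _ (pred_closed_diff_reach (s:=s) closedV) validV' _.
    exact: leq_trans (proper_card (diff_reach_proper closedV sV)) Vn.
  rewrite (sources_diff_reach closedV sW); apply: (td_le_sub td_k') => // a b _ _.
  exact: (contr_adj_in_sub (subsetDl _ _)).
apply: dtd_disc => // [|x xV]; first by apply/set0Pn; exists x0.
have sC := comp_sub e V x.
apply: IH _ _ _ (pred_closed_comp (x:=x) closedV) (valid_in_sub sC validf) _.
  have CV : comp e V x \proper V.
    rewrite properEneq sC andbT; apply: contraNneq Vnc => <-.
    exact: uconnected_comp.
  exact: leq_trans (proper_card CV) Vn.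
apply: (td_le_sub td_k (setIS _ sC)) => a b _ _; exact: (contr_adj_in_sub sC).
Qed.

Lemma comp_contraction_sub V f x : pred_closed V -> x \in V ->
  comp (contr_adj_in V f) (S :&: V) x \subset comp e V x.
Proof.
move=> closedV xV; apply/subsetP=> y /comp_connect xy.
apply: (connect_invariant (P := fun a => a \in comp e V x)) xy (mem_comp e xV).
move=> a b /and3P[_ /setIP[_ bV] ab] aC.
have {}ab : contr_adj_in V f a b by case/orP: ab; rewrite // contr_adj_in_sym.
case/contr_adj_inP: (contr_adj_in_comp closedV aC ab) => _ [w [wC _ _ bw _]].
by rewrite (comp_connectE x closedV bw (subsetP (comp_sub e V x) w wC)).
Qed.

(* The contraction maps chosen on the components of [V] glue together, since
   every contraction edge and its witness lie in a single component. *)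
Lemma contraction_td_le_comps V k : pred_closed V ->
  (forall x, x \in V -> contraction_td_le (comp e V x) k) -> contraction_td_le V k.
Proof.
move=> closedV hC; pose P C g := forall x, x \in V -> C = comp e V x ->
  valid_in C g /\ td_le (contr_adj_in C g) (S :&: C) k.
have [F FP] : exists F, forall C, P C (F C).
  apply: functional_choice => C.
  have [/exists_inP[x xV /eqP->] | noC] := boolP [exists x in V, C == comp e V x].
    by have [g gP] := hC x xV; exists g.
  by exists id => x xV Cx; case/negP: noC; apply/exists_inP; exists x; rewrite // Cx.
pose f v := F (comp e V v) v; exists f; split.
  move=> v vV vS; have [validv _] := FP _ v vV erefl.
  exact: validv v (mem_comp e vV) vS.
apply: td_le_comps => s /setIP[_ sV]; have [_ td_s] := FP _ s sV erefl.
have sub := comp_contraction_sub f closedV sV.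
apply: (td_le_sub td_s).
  apply/subsetP=> y yG; rewrite in_setI (subsetP sub y yG) andbT.
  by case/setIP: (subsetP (comp_sub _ _ _) y yG).
move=> a b aG bG ab; rewrite -(@eq_contr_adj_in _ f) => [|w wC].
  exact: contr_adj_in_comp closedV (subsetP sub a aG) ab.
by rewrite /f (comp_trans wC).
Qed.

(* Map everything reachable from the new root [s] to [s]: the contraction
   graph on [S :&: V] minus [s] is then a subgraph of the one on the rest. *)
Lemma contraction_td_le_source V s k : pred_closed V -> uconnected e V ->
  s \in S :&: V -> contraction_td_le (V :\: reach_in e V s) k ->
  contraction_td_le V k.+1.
Proof.
move=> closedV Vc sW [f' [valid' td']]; have [sS sV] := setIP sW.
have mem_rest w : w \in V -> (w \in V :\: reach_in e V s) = ~~ connect e s w.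
  by move=> wV; rewrite reach_inE // in_setD in_setI wV mem_reach andbT.
pose f v := if connect e s v then s else f' v.
have validf : valid_in V f.
  move=> v vV vS; rewrite /f; case: ifP => [sv | /negbT sv]; first by [].
  by apply: valid' vS; rewrite mem_rest.
exists f; split=> //.
apply: (td_conn (uconnected_contraction closedV validf Vc) sW).
apply: (td_le_sub td') => [|a b]; first by rewrite (sources_diff_reach closedV sW).
move=> /setD1P[aNs _] /setD1P[bNs _] /contr_adj_inP[ab [w [wV wS aw bw fw]]].
have sw : ~~ connect e s w.
  apply: contraTN fw; rewrite /f => ->.
  by rewrite ![s == _]eq_sym (negbTE aNs) (negbTE bNs).
apply/contr_adj_inP; split=> //; exists w; split; rewrite ?mem_rest //.
by move: fw; rewrite /f (negbTE sw).
Qed.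

Lemma contraction_of_dtd_le V k : dtd_le e V k -> pred_closed V ->
  contraction_td_le V k.
Proof.
elim=> {V k} [k _ | V k _ _ _ IH closedV | V s k Vc s_src _ IH closedV].
- by exists id; split=> [v|]; rewrite ?inE // setI0; apply: td_empty.
- by apply: contraction_td_le_comps => // x xV; apply: IH (pred_closed_comp closedV).
have sV : s \in V by case/andP: s_src.
apply: contraction_td_le_source Vc _ (IH (pred_closed_diff_reach closedV)) => //.
by rewrite in_setI sV andbT -(is_source_inE closedV sV).
Qed.

Lemma in_GH_contraction f :
  valid_in [set: T] f -> in_GH e (contr_adj_in [set: T] f).
Proof.
move=> validf; exists f; split=> [v | a b].
  by rewrite mem_nonsources mem_reach; apply: validf; rewrite in_setT.
by apply: andb_id2l => _; apply: eq_existsb => v; rewrite in_setT.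
Qed.

Lemma exists_valid_contraction : exists f, valid_in [set: T] f.
Proof.
exists (fun v => odflt v [pick s in S | connect e s v]) => v _ _.
case: pickP => [s /andP[]//|none].
by have [s sS sv] := exists_source v; have := none s; rewrite sS sv.
Qed.

End DagContractions.

Theorem mainTheorem6 (T : finType) (e : rel T) (He : acyclic e) :
  exists (H1 H2 : rel T) (t1 d t2 : nat),
    [/\ in_GH e H1, in_GH e H2,
        is_td H1 (sources e) t1, is_td H2 (sources e) t2 & is_dtd e d]
    /\ t1 <= d <= t2.
Proof.
have [f2 valid2] := exists_valid_contraction He.
pose H2 := contr_adj_in e [set: T] f2.
have [t2 [td2 min2]] := ex_minimal (ex_intro _ _ (td_le_card H2 (sources e))).
have dtd_t2 : dtd_le e [set: T] t2.
  by apply: (dtd_le_of_contraction He (@pred_closedT _ e) valid2); rewrite setIT.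
have [d [dtd_d min_d]] := ex_minimal (ex_intro _ _ dtd_t2).
have [f1 [valid1 td1]] := contraction_of_dtd_le He dtd_d (@pred_closedT _ e).
rewrite setIT in td1; pose H1 := contr_adj_in e [set: T] f1.
have [t1 [td_t1 min1]] := ex_minimal (ex_intro _ _ td1).
exists H1, H2, t1, d, t2; split; last by rewrite min1 // min_d.
by split=> //; apply: in_GH_contraction.
Qed.
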